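(* Let $A,B$ be non-empty sets, $I$ a non-empty index set, $\{V_i\}_{i\in I}\subseteq\mathcal R(A)$, $\{W_i\}_{i\in I}\subseteq\mathcal R(B)$, $Z\in\mathcal R(A,B)$. For each $t\in\{1,\dots,6\}$, the system $WL^{2\text{-}t}(A,B,I,V_i,W_i,Z)$ has a greatest solution (possibly the empty relation, i.e. constantly $0$). If moreover $Z$ is a partial fuzzy function, then the greatest solutions to $WL^{2\text{-}3}(A,B,I,V_i,W_i,Z)$ and $WL^{2\text{-}4}(A,B,I,V_i,W_i,Z)$ are partial fuzzy functions.
   Context: $\mathcal L=(L,\wedge,\vee,\otimes,\to,0,1)$ is a complete residuated lattice; $x\leftrightarrow y=(x\to y)\wedge(y\to x)$. For non-empty sets $X,Y$, $\mathcal R(X,Y)$ is the set of fuzzy relations $X\times Y\to L$, $\mathcal R(X)=\mathcal R(X,X)$, ordered pointwise; $R^{-1}(y,x)=R(x,y)$; $(R\circ S)(x,t)=\bigvee_{y}R(x,y)\otimes S(y,t)$. Heterogeneous systems with unknown $U\in\mathcal R(A,B)$: $WL^{2\text{-}1}$: $U^{-1}\circ V_i\le W_i\circ U^{-1}$ ($i\in I$), $U\le Z$; $WL^{2\text{-}2}$: $V_i\circ U\le U\circ W_i$ ($i\in I$), $U\le Z$; $WL^{2\text{-}3}$: $U^{-1}\circ V_i\le W_i\circ U^{-1}$ and $U\circ W_i\le V_i\circ U$ ($i\in I$), $U\le Z$; $WL^{2\text{-}4}$: $V_i\circ U\le U\circ W_i$ and $W_i\circ U^{-1}\le U^{-1}\circ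 V_i$ ($i\in I$), $U\le Z$; $WL^{2\text{-}5}$: $V_i\circ U=U\circ W_i$ ($i\in I$), $U\le Z$; $WL^{2\text{-}6}$: $U^{-1}\circ V_i=W_i\circ U^{-1}$ ($i\in I$), $U\le Z$. For $R\in\mathcal R(A,B)$, its kernel is $E_A^R(a_1,a_2)=\bigwedge_{b\in B}R(a_1,b)\leftrightarrow R(a_2,b)$ and co-kernel $E_B^R(b_1,b_2)=\bigwedge_{a\in A}R(a,b_1)\leftrightarrow R(a,b_2)$. $R$ is a partial fuzzy function if $R(a,b_1)\otimes R(a,b_2)\le E_B^R(b_1,b_2)$ for all $a\in A$, $b_1,b_2\in B$ (equivalently, as is known, $R\circ R^{-1}\circ R\le R$). *)

Record CRL := {
  carrier :> Type;
  le : carrier -> carrier -> Prop;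
  sup : (carrier -> Prop) -> carrier;
  inf : (carrier -> Prop) -> carrier;
  tens : carrier -> carrier -> carrier;
  res : carrier -> carrier -> carrier;
  zero : carrier;
  one : carrier;
  le_refl : forall x, le x x;
  le_antisym : forall x y, le x y -> le y x -> x = y;
  le_trans : forall x y z, le x y -> le y z -> le x z;
  sup_ub : forall (S : carrier -> Prop) x, S x -> le x (sup S);
  sup_least : forall (S : carrier -> Prop) y,
      (forall x, S x -> le x y) -> le (sup S) y;
  inf_lb : forall (S : carrier -> Prop) x, S x -> le (inf S) x;
  inf_greatest : forall (S : carrier -> Prop) y,
      (forall x, S x -> le y x) -> le y (inf S);
  zero_least : forall x, le zero x;
  one_greatest : forall x, le x one;
  tens_assoc : forall x y z, tens x (tens y z) = tens (tens x y) z;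
  tens_comm : forall x y, tens x y = tens y x;
  tens_one : forall x, tens x one = x;
  adjoint : forall x y z, le (tens x y) z <-> le x (res y z)
}.

Arguments le {c}.
Arguments sup {c}.
Arguments inf {c}.
Arguments tens {c}.
Arguments res {c}.
Arguments zero {c}.
Arguments one {c}.

Section Rel.
Variable L : CRL.

Definition meet (x y : L) : L := inf (fun z => z = x \/ z = y).
Definition biimp (x y : L) : L := meet (res x y) (res y x).

Definition frel (X Y : Type) := X -> Y -> L.

Definition rle {X Y : Type} (R S : frel X Y) : Prop :=
  forall x y, le (R x y) (S x y).
Definition req {X Y : Type} (R S : frel X Y) : Prop :=
  forall x y, R x y = S x y.
Definition inv {X Y : Type} (R : frel X Y) : frel Y X := fun y x => R x y.
Definition comp {X Y T : Type} (R : frel X Y) (S : frel Y T) : frel X T :=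
  fun x t => sup (fun v => exists y, v = tens (R x y) (S y t)).

Definition kernel {X Y : Type} (R : frel X Y) : frel X X :=
  fun a1 a2 => inf (fun v => exists b, v = biimp (R a1 b) (R a2 b)).
Definition cokernel {X Y : Type} (R : frel X Y) : frel Y Y :=
  fun b1 b2 => inf (fun v => exists a, v = biimp (R a b1) (R a b2)).

Definition partial_fuzzy_function {X Y : Type} (R : frel X Y) : Prop :=
  forall a b1 b2, le (tens (R a b1) (R a b2)) (cokernel R b1 b2).

Definition greatest {X Y : Type} (P : frel X Y -> Prop) (U : frel X Y) : Prop :=
  P U /\ forall U', P U' -> rle U' U.

Section Systems.
Variables (A B I : Type) (V : I -> frel A A) (W : I -> frel B B) (Z : frel A B).

Definition WL2_1 (U : frel A B) : Prop :=
  (forall i, rle (comp (inv U) (V i)) (comp (W i) (inv U))) /\ rle U Z.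
Definition WL2_2 (U : frel A B) : Prop :=
  (forall i, rle (comp (V i) U) (comp U (W i))) /\ rle U Z.
Definition WL2_3 (U : frel A B) : Prop :=
  (forall i, rle (comp (inv U) (V i)) (comp (W i) (inv U)) /\
             rle (comp U (W i)) (comp (V i) U)) /\ rle U Z.
Definition WL2_4 (U : frel A B) : Prop :=
  (forall i, rle (comp (V i) U) (comp U (W i)) /\
             rle (comp (W i) (inv U)) (comp (inv U) (V i))) /\ rle U Z.
Definition WL2_5 (U : frel A B) : Prop :=
  (forall i, req (comp (V i) U) (comp U (W i))) /\ rle U Z.
Definition WL2_6 (U : frel A B) : Prop :=
  (forall i, req (comp (inv U) (V i)) (comp (W i) (inv U))) /\ rle U Z.
End Systems.
End Rel.

Arguments rle {L X Y}.
Arguments req {L X Y}.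
Arguments inv {L X Y}.
Arguments comp {L X Y T}.
Arguments kernel {L X Y}.
Arguments cokernel {L X Y}.
Arguments partial_fuzzy_function {L X Y}.
Arguments greatest {L X Y}.
Arguments WL2_1 {L A B I}.
Arguments WL2_2 {L A B I}.
Arguments WL2_3 {L A B I}.
Arguments WL2_4 {L A B I}.
Arguments WL2_5 {L A B I}.
Arguments WL2_6 {L A B I}.

From Stdlib Require Import Morphisms Setoid FunctionalExtensionality.

(** The solutions of each system are closed under arbitrary pointwise joins:
    [U <= Z] is preserved, and every defining inequality has the form
    [F U <= G U] with [F] join-preserving (composition distributes over
    suprema) and [G] monotone; an equation is two such inequalities.  So the
    join of all solutions (the constant [0] relation if there are none) is the
    greatest solution.

    If [Z] is a partial fuzzy function, [U o U^-1 o U] solves [WL2_3]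
    (resp. [WL2_4]) whenever [U] does: it lies below [Z o Z^-1 o Z <= Z], and
    the kernel-like [U o U^-1] commutes past each [V_i].  Hence the greatest
    solution [U] satisfies [U o U^-1 o U <= U], which characterizes partial
    fuzzy functions. *)

Section Residuated.
Variable L : CRL.

Lemma tens_mono_l (x y z : L) : le x y -> le (tens x z) (tens y z).
Proof.
  intro Hxy. apply adjoint. eapply le_trans; [exact Hxy|]. apply adjoint, le_refl.
Qed.

Lemma tens_mono_r (x y z : L) : le x y -> le (tens z x) (tens z y).
Proof. intro Hxy. rewrite !(tens_comm _ z). now apply tens_mono_l. Qed.

Lemma tens_sup_l_le (S : L -> Prop) (z c : L) :
  (forall s, S s -> le (tens s z) c) -> le (tens (sup S) z) c.
Proof.
  intro HS. apply adjoint, sup_least. intros s Hs. now apply adjoint, HS.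
Qed.

Lemma tens_sup_r_le (S : L -> Prop) (z c : L) :
  (forall s, S s -> le (tens z s) c) -> le (tens z (sup S)) c.
Proof.
  intro HS. rewrite tens_comm. apply tens_sup_l_le.
  intros s Hs. rewrite tens_comm. now apply HS.
Qed.

End Residuated.

Section Relations.
Variable L : CRL.

#[local] Instance rle_preorder {X Y : Type} : PreOrder (@rle L X Y).
Proof.
  split.
  - intros R x y. apply le_refl.
  - intros R S T HRS HST x y. eapply le_trans; [apply HRS | apply HST].
Qed.

Lemma rle_antisym {X Y : Type} (R S : frel L X Y) : rle R S -> rle S R -> R = S.
Proof.
  intros HRS HSR. do 2 (apply functional_extensionality; intro).
  now apply le_antisym.
Qed.

Lemma req_eq {X Y : Type} (R S : frel L X Y) : req R S -> R = S.
Proof. intro H. do 2 (apply functional_extensionality; intro). apply H. Qed.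

Lemma comp_ub {X Y T : Type} (R : frel L X Y) (S : frel L Y T) x y t :
  le (tens (R x y) (S y t)) (comp R S x t).
Proof. apply sup_ub. eauto. Qed.

Lemma comp_lub {X Y T : Type} (R : frel L X Y) (S : frel L Y T) x t c :
  (forall y, le (tens (R x y) (S y t)) c) -> le (comp R S x t) c.
Proof. intro H. apply sup_least. intros v [y ->]. apply H. Qed.

#[local] Instance comp_rle_proper {X Y T : Type} :
  Proper (rle ==> rle ==> rle) (@comp L X Y T).
Proof.
  intros R R' HR S S' HS x t. apply comp_lub. intro y.
  eapply le_trans; [| apply comp_ub].
  eapply le_trans; [apply tens_mono_l, HR | apply tens_mono_r, HS].
Qed.

#[local] Instance inv_rle_proper {X Y : Type} : Proper (rle ==> rle) (@inv L X Y).
Proof. intros R S H y x. apply H. Qed.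

Lemma comp_assoc {X Y Z T : Type} (R : frel L X Y) (S : frel L Y Z) (U : frel L Z T) :
  comp (comp R S) U = comp R (comp S U).
Proof.
  apply rle_antisym; intros x t.
  - apply comp_lub. intro z. apply tens_sup_l_le. intros s [y ->].
    rewrite <- tens_assoc. eapply le_trans; [apply tens_mono_r, comp_ub | apply comp_ub].
  - apply comp_lub. intro y. apply tens_sup_r_le. intros s [z ->].
    rewrite tens_assoc. eapply le_trans; [apply tens_mono_l, comp_ub | apply comp_ub].
Qed.

Lemma inv_comp {X Y T : Type} (R : frel L X Y) (S : frel L Y T) :
  inv (comp R S) = comp (inv S) (inv R).
Proof.
  apply rle_antisym; intros t x; unfold inv; apply comp_lub; intro y;
    rewrite tens_comm.
  - exact (comp_ub (inv S) (inv R) t y x).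
  - exact (comp_ub R S x y t).
Qed.

Lemma inv_inv {X Y : Type} (R : frel L X Y) : inv (inv R) = R.
Proof. reflexivity. Qed.

Lemma rle_inv {X Y : Type} (R S : frel L X Y) : rle (inv R) (inv S) <-> rle R S.
Proof. split; intros H x y; apply H. Qed.

Definition rjoin {J X Y : Type} (Q : J -> Prop) (G : J -> frel L X Y) : frel L X Y :=
  fun x y => sup (fun v => exists j, Q j /\ v = G j x y).

Definition rsup {X Y : Type} (P : frel L X Y -> Prop) : frel L X Y :=
  rjoin P (fun U => U).

Section Joins.
Context {J X Y : Type} (Q : J -> Prop) (G : J -> frel L X Y).

Lemma rjoin_ub j : Q j -> rle (G j) (rjoin Q G).
Proof. intros Hj x y. apply sup_ub. eauto. Qed.

Lemma rjoin_lub (T : frel L X Y) : (forall j, Q j -> rle (G j) T) -> rle (rjoin Q G) T.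
Proof. intros H x y. apply sup_least. intros v [j [Hj ->]]. now apply H. Qed.

Lemma inv_rjoin : inv (rjoin Q G) = rjoin Q (fun j => inv (G j)).
Proof. reflexivity. Qed.

Lemma comp_rjoin_l_le {T : Type} (S : frel L Y T) (R : frel L X T) :
  (forall j, Q j -> rle (comp (G j) S) R) -> rle (comp (rjoin Q G) S) R.
Proof.
  intros H x t. apply comp_lub. intro y. apply tens_sup_l_le.
  intros s [j [Hj ->]]. eapply le_trans; [apply comp_ub | now apply H].
Qed.

Lemma comp_rjoin_r_le {T : Type} (S : frel L T X) (R : frel L T Y) :
  (forall j, Q j -> rle (comp S (G j)) R) -> rle (comp S (rjoin Q G)) R.
Proof.
  intros H x t. apply comp_lub. intro y. apply tens_sup_r_le.
  intros s [j [Hj ->]]. eapply le_trans; [apply comp_ub | now apply H].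
Qed.

Lemma rjoin_intertwine_r (S : frel L Y Y) (T : frel L X X) :
  (forall j, Q j -> rle (comp (G j) S) (comp T (G j))) ->
  rle (comp (rjoin Q G) S) (comp T (rjoin Q G)).
Proof.
  intro H. apply comp_rjoin_l_le. intros j Hj.
  rewrite (H j Hj). now rewrite (rjoin_ub j Hj).
Qed.

Lemma rjoin_intertwine_l (S : frel L X X) (T : frel L Y Y) :
  (forall j, Q j -> rle (comp S (G j)) (comp (G j) T)) ->
  rle (comp S (rjoin Q G)) (comp (rjoin Q G) T).
Proof.
  intro H. apply comp_rjoin_r_le. intros j Hj.
  rewrite (H j Hj). now rewrite (rjoin_ub j Hj).
Qed.

End Joins.

Lemma greatest_rsup {X Y : Type} (P : frel L X Y -> Prop) :
  P (rsup P) -> greatest P (rsup P).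
Proof. intro HP. split; [exact HP |]. intros U HU. exact (rjoin_ub P (fun U => U) U HU). Qed.

Section PartialFunctions.
Context {X Y : Type}.

Lemma pff_triple_le (R : frel L X Y) :
  partial_fuzzy_function R -> rle (comp (comp R (inv R)) R) R.
Proof.
  intros HR a b. apply comp_lub. intro a'. apply tens_sup_l_le. intros s [b' ->].
  unfold inv. rewrite <- tens_assoc, tens_comm. apply adjoint.
  eapply le_trans; [apply HR |].
  eapply le_trans; [apply inf_lb; now exists a |]. apply inf_lb. now left.
Qed.

Lemma triple_le_pff (R : frel L X Y) :
  rle (comp (comp R (inv R)) R) R -> partial_fuzzy_function R.
Proof.
  intros HR a b1 b2.
  assert (Hpt : forall c1 c2 a',
    le (tens (tens (R a c1) (R a c2)) (R a' c1)) (R a' c2)).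
  { intros c1 c2 a'. eapply le_trans; [| apply HR].
    rewrite tens_comm, tens_assoc.
    eapply le_trans; [apply tens_mono_l, (comp_ub R (inv R) a' c1 a) | apply comp_ub]. }
  apply inf_greatest. intros v [a' ->]. apply inf_greatest.
  intros w [-> | ->]; apply (proj1 (adjoint _ _ _ _)).
  - apply Hpt.
  - rewrite (tens_comm _ (R a b1)). apply Hpt.
Qed.

Lemma triple_le_of_le (R Z : frel L X Y) :
  partial_fuzzy_function Z -> rle R Z -> rle (comp (comp R (inv R)) R) Z.
Proof. intros HZ HRZ. rewrite HRZ. now apply pff_triple_le. Qed.

Lemma inv_triple (R : frel L X Y) :
  inv (comp (comp R (inv R)) R) = comp (inv R) (comp R (inv R)).
Proof. now rewrite !inv_comp, inv_inv. Qed.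

Lemma greatest_pff (P : frel L X Y -> Prop) (U : frel L X Y) :
  (forall R, P R -> P (comp (comp R (inv R)) R)) -> greatest P U ->
  partial_fuzzy_function U.
Proof. intros Hclosed [HU Hmax]. now apply triple_le_pff, Hmax, Hclosed. Qed.

Section Intertwining.
Variables (R : frel L X Y) (S : frel L X X) (T : frel L Y Y).
Hypotheses (HinvR : rle (comp (inv R) S) (comp T (inv R)))
           (HR : rle (comp R T) (comp S R)).

Lemma kernel_subcommute : rle (comp (comp R (inv R)) S) (comp S (comp R (inv R))).
Proof.
  rewrite comp_assoc, HinvR, <- comp_assoc, HR, comp_assoc. reflexivity.
Qed.

Lemma triple_intertwine :
  rle (comp (inv (comp (comp R (inv R)) R)) S) (comp T (inv (comp (comp R (inv R)) R))) /\
  rle (comp (comp (comp R (inv R)) R) T) (comp S (comp (comp R (inv R)) R)).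
Proof.
  split.
  - rewrite inv_triple, comp_assoc, kernel_subcommute, <- comp_assoc, HinvR, comp_assoc.
    reflexivity.
  - rewrite comp_assoc, HR, <- comp_assoc, kernel_subcommute, comp_assoc.
    reflexivity.
Qed.

End Intertwining.

(* The [WL2_4] inequalities for [S, T] are the [WL2_3] ones for the converses
   [S^-1, T^-1]. *)
Lemma triple_intertwine_dual (R : frel L X Y) (S : frel L X X) (T : frel L Y Y) :
  rle (comp S R) (comp R T) -> rle (comp T (inv R)) (comp (inv R) S) ->
  rle (comp S (comp (comp R (inv R)) R)) (comp (comp (comp R (inv R)) R) T) /\
  rle (comp T (inv (comp (comp R (inv R)) R))) (comp (inv (comp (comp R (inv R)) R)) S).
Proof.
  intros HSR HTR. apply (proj2 (rle_inv _ _)) in HSR, HTR.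
  rewrite !inv_comp in HSR. rewrite !inv_comp, inv_inv in HTR.
  destruct (triple_intertwine R (inv S) (inv T) HSR HTR) as [H1 H2].
  set (R3 := comp (comp R (inv R)) R) in *.
  split; apply (proj1 (rle_inv _ _)); rewrite !inv_comp, ?inv_inv; assumption.
Qed.

End PartialFunctions.

Section Systems.
Variables (A B I : Type) (V : I -> frel L A A) (W : I -> frel L B B) (Z : frel L A B).

Lemma rsup_le_of_bound (P : frel L A B -> Prop) :
  (forall U, P U -> rle U Z) -> rle (rsup P) Z.
Proof. apply rjoin_lub. Qed.

Lemma WL2_1_rsup : WL2_1 V W Z (rsup (WL2_1 V W Z)).
Proof.
  split; [| apply rsup_le_of_bound; intros U HU; apply HU].
  intro i. unfold rsup. rewrite inv_rjoin.
  apply rjoin_intertwine_r. intros U HU. apply HU.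
Qed.

Lemma WL2_2_rsup : WL2_2 V W Z (rsup (WL2_2 V W Z)).
Proof.
  split; [| apply rsup_le_of_bound; intros U HU; apply HU].
  intro i. apply rjoin_intertwine_l. intros U HU. apply HU.
Qed.

Lemma WL2_3_rsup : WL2_3 V W Z (rsup (WL2_3 V W Z)).
Proof.
  split; [| apply rsup_le_of_bound; intros U HU; apply HU].
  intro i. split.
  - unfold rsup. rewrite inv_rjoin.
    apply rjoin_intertwine_r. intros U HU. apply HU.
  - apply rjoin_intertwine_r. intros U HU. apply HU.
Qed.

Lemma WL2_4_rsup : WL2_4 V W Z (rsup (WL2_4 V W Z)).
Proof.
  split; [| apply rsup_le_of_bound; intros U HU; apply HU].
  intro i. split.
  - apply rjoin_intertwine_l. intros U HU. apply HU.
  - unfold rsup. rewrite inv_rjoin.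
    apply rjoin_intertwine_l. intros U HU. apply HU.
Qed.

Lemma WL2_5_rsup : WL2_5 V W Z (rsup (WL2_5 V W Z)).
Proof.
  split; [| apply rsup_le_of_bound; intros U HU; apply HU].
  intros i x y. apply le_antisym; revert x y.
  - apply rjoin_intertwine_l. intros U HU. now rewrite (req_eq _ _ (proj1 HU i)).
  - apply rjoin_intertwine_r. intros U HU. now rewrite (req_eq _ _ (proj1 HU i)).
Qed.

Lemma WL2_6_rsup : WL2_6 V W Z (rsup (WL2_6 V W Z)).
Proof.
  split; [| apply rsup_le_of_bound; intros U HU; apply HU].
  intros i x y. apply le_antisym; revert x y; unfold rsup; rewrite inv_rjoin.
  - apply rjoin_intertwine_r. intros U HU. now rewrite (req_eq _ _ (proj1 HU i)).
  - apply rjoin_intertwine_l. intros U HU. now rewrite (req_eq _ _ (proj1 HU i)).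
Qed.

Lemma WL2_3_triple (U : frel L A B) :
  partial_fuzzy_function Z -> WL2_3 V W Z U -> WL2_3 V W Z (comp (comp U (inv U)) U).
Proof.
  intros HZ [HU HUZ]. split; [intro i | now apply triple_le_of_le].
  destruct (HU i) as [HinvU HWU]. exact (triple_intertwine U (V i) (W i) HinvU HWU).
Qed.

Lemma WL2_4_triple (U : frel L A B) :
  partial_fuzzy_function Z -> WL2_4 V W Z U -> WL2_4 V W Z (comp (comp U (inv U)) U).
Proof.
  intros HZ [HU HUZ]. split; [intro i | now apply triple_le_of_le].
  destruct (HU i) as [HVU HinvU]. exact (triple_intertwine_dual U (V i) (W i) HVU HinvU).
Qed.

End Systems.
End Relations.

Theorem theorem4p4 (L : CRL) (A B I : Type)
  (hA : inhabited A) (hB : inhabited B) (hI : inhabited I)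
  (V : I -> frel L A A) (W : I -> frel L B B) (Z : frel L A B) :
  ((exists U, greatest (WL2_1 V W Z) U) /\
   (exists U, greatest (WL2_2 V W Z) U) /\
   (exists U, greatest (WL2_3 V W Z) U) /\
   (exists U, greatest (WL2_4 V W Z) U) /\
   (exists U, greatest (WL2_5 V W Z) U) /\
   (exists U, greatest (WL2_6 V W Z) U)) /\
  (partial_fuzzy_function Z ->
     (forall U, greatest (WL2_3 V W Z) U -> partial_fuzzy_function U) /\
     (forall U, greatest (WL2_4 V W Z) U -> partial_fuzzy_function U)).
Proof.
  split.
  - repeat split; eexists; apply greatest_rsup.
    + apply WL2_1_rsup.
    + apply WL2_2_rsup.
    + apply WL2_3_rsup.
    + apply WL2_4_rsup.
    + apply WL2_5_rsup.
    + apply WL2_6_rsup.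
  - intro HZ. split; intro U; apply greatest_pff; intro R.
    + now apply WL2_3_triple.
    + now apply WL2_4_triple.
Qed.
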